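(* For every positive integer $n$, $|\mathrm{Sort}_n(\mathrm{SC}_{3\underline{21}})|=2^{n-1}$.
   Context: $\mathfrak S_n$ is the set of permutations of $\{1,\dots,n\}$. A vincular pattern is a permutation with some entries underlined; a sequence contains it if it has a subsequence with the same relative order in which entries corresponding to adjacent underlined entries occupy consecutive positions. An occurrence of $3\underline{21}$ is $a_i a_j a_{j+1}$ with $i<j$ and $a_{j+1}<a_j<a_i$. For a pattern $\sigma$, the map $\mathrm{SC}_\sigma$ acts on $\tau$: read entries left to right; when the next entry $x$ is read, if pushing $x$ yields a stack whose entries read top to bottom (stack adjacency = consecutive positions) avoid $\sigma$, push $x$; otherwise pop the top stack entry to the output and repeat. At the end pop all remaining entries; the output is $\mathrm{SC}_\sigma(\tau)$. West's stack-sorting map is $s=\mathrm{SC}_{21}$. $\mathrm{Sort}_n(\mathrm{SC}_\sigma)=\{\tau\in\mathfrak S_n : s(\mathrm{SC}_\sigma(\tau))=12\cdots n\}$. *)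

From mathcomp Require Import all_boot all_fingroup.
Set Implicit Arguments. Unset Strict Implicit. Unset Printing Implicit Defensive.

(* A vincular pattern: [p] is the permutation (a word over 1..k) and
   [adj] has length k-1, with [nth false adj j = true] iff the entries at
   positions j and j+1 of the pattern are both underlined (i.e. their
   occurrences must be at consecutive positions). *)
Record vpattern := VPat { vp_perm : seq nat; vp_adj : seq bool }.

Fixpoint subseqs (s : seq nat) : seq (seq nat) :=
  match s with
  | [::] => [:: [::]]
  | x :: t => let r := subseqs t in [seq x :: u | u <- r] ++ r
  end.

(* [idx] (strictly increasing positions in [w]) is an occurrence of [sg] in [w]. *)
Definition is_occurrence (sg : vpattern) (w idx : seq nat) : bool :=
  let p := vp_perm sg in
  [&& size idx == size p,
      all (fun a => all (fun b =>
             (nth 0 p a < nth 0 p b) ==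
             (nth 0 w (nth 0 idx a) < nth 0 w (nth 0 idx b)))
           (iota 0 (size p))) (iota 0 (size p)) &
      all (fun j => nth false (vp_adj sg) j ==>
             (nth 0 idx j.+1 == (nth 0 idx j).+1))
          (iota 0 (size p).-1)].

Definition contains (sg : vpattern) (w : seq nat) : bool :=
  has (is_occurrence sg w) (subseqs (iota 0 (size w))).

Definition avoids (sg : vpattern) (w : seq nat) : bool := ~~ contains sg w.

(* Stacks are lists read top to bottom (head = top of the stack). *)
Fixpoint sc_read (sg : vpattern) (x : nat) (st out : seq nat) : seq nat * seq nat :=
  if avoids sg (x :: st) then (x :: st, out) else
  match st with
  | [::] => ([:: x], out) (* unreachable for patterns of length >= 2 *)
  | y :: st' => sc_read sg x st' (rcons out y)
  end.

Fixpoint sc_aux (sg : vpattern) (inp st out : seq nat) : seq nat :=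
  match inp with
  | [::] => out ++ st
  | x :: t => let: (st', out') := sc_read sg x st out in sc_aux sg t st' out'
  end.

Definition SC (sg : vpattern) (tau : seq nat) : seq nat := sc_aux sg tau [::] [::].

Definition pat21 : vpattern := VPat [:: 2; 1] [:: false].
Definition pat3_21 : vpattern := VPat [:: 3; 2; 1] [:: false; true].

Definition west_s (w : seq nat) : seq nat := SC pat21 w.

Definition word n (g : 'S_n) : seq nat := [seq (nat_of_ord (g i)).+1 | i <- enum 'I_n].

Definition Sort_set n (sg : vpattern) : {set 'S_n} :=
  [set g : 'S_n | west_s (SC sg (word g)) == iota 1 n].

From mathcomp Require Import all_boot all_fingroup.
Set Implicit Arguments. Unset Strict Implicit. Unset Printing Implicit Defensive.

(* Split a word at its largest entry: w = L ++ M :: R.  While SC_{3_21} reads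
   L and then M it outputs some P and is left with the stack M :: Q, Q weakly
   increasing from the top; under entries smaller than M this bottom part never
   takes part in an occurrence of 3\underline{21}, so SC(w) = P ++ SC(R) ++ M :: Q.
   West's map sends A ++ M :: B to s(A) ++ s(B) ++ M, so s(SC(w)) is sorted iff
   P ++ SC(R) lies below Q and both parts are sortable.  Every pop leaves in the
   output an entry larger than one still on the stack, so this forces P = [],
   i.e. L decreasing and Q = rev L.  Hence the sortable permutations of [1..m+1]
   are [m; m-1; ...; j+1; m+1] ++ r with r sortable on [1..j], and their numbers
   satisfy a(m+1) = a(0) + ... + a(m) with a(0) = 1, that is a(m+1) = 2^m. *)

(** * Occurrences of 21 and of 3_21 *)

Lemma mem_subseqs s u : (u \in subseqs s) = subseq u s.
Proof.
elim: s u => [|x t IH] [|y u] //=; rewrite mem_cat IH ?sub0seq ?orbT //.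
have -> : (y :: u \in [seq x :: v | v <- subseqs t]) = (y == x) && subseq u t.
  by apply/mapP/andP => [[v + [-> ->]]|[/eqP-> ut]]; [rewrite IH | exists u; rewrite ?IH].
case: eqP => [->|_] //=; by apply/idP/idP => [/orP[//|/cons_subseq]|->].
Qed.

Lemma subseq_iota0E u m : subseq u (iota 0 m) = sorted ltn u && all (gtn m) u.
Proof.
apply/idP/andP => [sub_u|[su am]].
  split; first exact: (subseq_sorted ltn_trans sub_u (iota_ltn_sorted 0 m)).
  by apply/allP => x /(mem_subseq sub_u); rewrite mem_iota.
apply/subseq_uniqP; first exact: iota_uniq.
apply: (irr_sorted_eq ltn_trans ltnn) => //.
  exact/sorted_filter/iota_ltn_sorted/ltn_trans.
by move=> x; rewrite mem_filter mem_iota /=; case: (boolP (x \in u)) => // /(allP am).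
Qed.

Lemma containsP sg w :
  reflect (exists2 idx, sorted ltn idx && all (gtn (size w)) idx & is_occurrence sg w idx)
    (contains sg w).
Proof.
by apply: (iffP hasP) => -[idx]; rewrite ?mem_subseqs ?subseq_iota0E; exists idx;
  rewrite ?mem_subseqs ?subseq_iota0E.
Qed.

Lemma contains21P w :
  reflect (exists i j, [/\ i < j, j < size w & nth 0 w j < nth 0 w i]) (contains pat21 w).
Proof.
apply: (iffP (containsP _ _)) => [[[|i [|j [|k idx]]]] //|[i [j [ij jw lt]]]].
  rewrite /= !andbT /is_occurrence /= => /and3P[ij _ jw].
  by case/andP=> /and3P[_ /and3P[/eqP lt _ _] _] _; exists i, j.
exists [:: i; j]; first by rewrite /= ij jw (ltn_trans ij jw).
by rewrite /is_occurrence /= !ltnn lt (leq_gtF (ltnW lt)).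
Qed.

Lemma contains321P w :
  reflect (exists i j, [/\ i < j, j.+1 < size w, nth 0 w j.+1 < nth 0 w j
                                               & nth 0 w j < nth 0 w i])
    (contains pat3_21 w).
Proof.
apply: (iffP (containsP _ _)) => [[[|i [|j [|k [|l idx]]]]] //|[i [j [ij jw lt1 lt2]]]].
  rewrite /= !andbT /is_occurrence /= => /and4P[/andP[ij _] _ _ kw].
  case/and3P=> /and4P[_ /and4P[/eqP lt2 _ _ _] /and4P[_ /eqP lt1 _ _] _] /eqP kE _.
  by subst k; exists i, j.
exists [:: i; j; j.+1].
  by rewrite /= ij ltnSn jw !(ltn_trans _ jw) ?(ltn_trans ij).
have lt12 := ltn_trans lt1 lt2.
by rewrite /is_occurrence /= !ltnn lt1 lt2 lt12 (leq_gtF (ltnW lt1)) (leq_gtF (ltnW lt2))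
  (leq_gtF (ltnW lt12)) !eqxx.
Qed.

Lemma avoids21E w : avoids pat21 w = sorted leq w.
Proof.
rewrite /avoids (sorted_pairwise leq_trans); apply/negP/(pairwiseP 0) => [no21 i j|le_w].
  rewrite !inE => iw jw ij; rewrite leqNgt; apply/negP => lt_ji.
  by apply: no21; apply/contains21P; exists i, j.
by case/contains21P => i [j [ij jw]]; rewrite ltnNge (le_w i j) // inE (ltn_trans ij jw).
Qed.

(* [desc_below mx t] says that [mx :: t] contains 3\underline{21}; only the
   running maximum of the prefix matters, and it is carried in [mx]. *)
Fixpoint desc_below (mx : nat) (t : seq nat) : bool :=
  if t is a :: t' then
    (if t' is b :: _ then (b < a) && (a < mx) else false) || desc_below (maxn mx a) t'
  else false.

Definition has321 (w : seq nat) : bool := if w is x :: t then desc_below x t else false.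

Lemma desc_belowP mx t :
  desc_below mx t <-> exists j, [/\ j.+1 < size t, nth 0 t j.+1 < nth 0 t j &
    nth 0 t j < mx \/ exists2 i, i < j & nth 0 t j < nth 0 t i].
Proof.
elim: t mx => [|a t IH] mx /=; first by split => // -[j []].
split.
  case/orP => [|/IH [j [jt lt1 [|[i ij lt2]]]]].
  - by case: t {IH} => // b t /andP[ba amx]; exists 0; split => //; left.
  - rewrite leq_max => /orP[lt2|lt2]; exists j.+1; split => //; first by left.
    by right; exists 0.
  - by exists j.+1; split => //; right; exists i.+1.
case=> -[|j] [jt lt1 lt2].
  by case: t jt lt1 lt2 {IH} => // b t _ /= -> [->|[]].
apply/orP; right; apply/IH; exists j; split => //.
case: lt2 => [lt2|[[|i] ij lt2]]; rewrite ?leq_max ?lt2 ?orbT; [by left|by left|].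
by right; exists i.
Qed.

Lemma has321P w :
  reflect (exists i j, [/\ i < j, j.+1 < size w, nth 0 w j.+1 < nth 0 w j
                                               & nth 0 w j < nth 0 w i])
    (has321 w).
Proof.
case: w => [|x t] /=; first by constructor => -[i [j [ij]]]; rewrite ltn0.
apply: (iffP idP) => [/desc_belowP [j [jt lt1 [lt2|[i ij lt2]]]]|[i [[|j] [ij jt lt1 lt2]]]] //.
- by exists 0, j.+1.
- by exists i.+1, j.+1.
apply/desc_belowP; exists j; split => //.
by case: i ij lt2 => [|i] ij lt2; [left | right; exists i].
Qed.

Lemma avoids321E w : avoids pat3_21 w = ~~ has321 w.
Proof. by rewrite /avoids; congr negb; apply/contains321P/has321P. Qed.

Lemma desc_below_sorted mx t : sorted leq t -> desc_below mx t = false.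
Proof.
elim: t mx => [|a t IH] mx //= st; rewrite IH ?(path_sorted st) // orbF.
by case: t st {IH} => // b t /andP[ab _]; rewrite ltnNge ab.
Qed.

Lemma desc_below_mono mx mx' t : mx <= mx' -> desc_below mx t -> desc_below mx' t.
Proof.
elim: t mx mx' => [|a t IH] mx mx' //= le_mx /orP[desc|desc]; apply/orP.
  by left; case: t desc {IH} => // b t /andP[-> /leq_trans->].
by right; apply: IH desc; rewrite geq_max leq_maxr leq_max le_mx.
Qed.

Lemma sorted_desc_below mx t : all (gtn mx) t -> ~~ desc_below mx t -> sorted leq t.
Proof.
elim: t => [|a t IH] //= /andP[amx ai]; rewrite negb_or (maxn_idPl (ltnW amx)).
case/andP=> no_desc /(IH ai); case: t no_desc {IH ai} => // b t.
by rewrite amx andbT -leqNgt /= => ->.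
Qed.

Lemma desc_below_cat_max mx M T Q : mx < M -> all (gtn M) T -> sorted leq Q ->
  desc_below mx (T ++ M :: Q) = desc_below mx T.
Proof.
elim: T mx => [|a T IH] mx mxM /=.
  move=> _ sQ; rewrite desc_below_sorted // orbF.
  by case: Q sQ => // b Q _; rewrite [M < mx]ltnNge (ltnW mxM) andbF.
case/andP => aM aT sQ; rewrite IH ?gtn_max ?mxM //.
by case: T aT {IH} => //= _; rewrite [M < a]ltnNge (ltnW aM).
Qed.

Lemma has321_behead y st : ~~ has321 (y :: st) -> ~~ has321 st.
Proof.
by case: st => // b t; apply: contra => /= desc; rewrite (desc_below_mono (leq_maxr y b) desc) orbT.
Qed.

Lemma has321_pop_descent x y st :
  ~~ has321 (y :: st) -> ~~ has321 (x :: st) -> has321 (x :: y :: st) ->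
  exists b t, st = b :: t /\ b < y.
Proof.
case: st => [|b t] // no_y no_x /orP[/andP[lt _]|desc]; first by exists b, t.
by case: (leqP x y) desc => _ desc; [case/negP: no_y | case/negP: no_x].
Qed.

(** * The pattern-avoiding stack machine *)

Section StackMachine.

Variable sg : vpattern.

Definition sc_step (s : seq nat * seq nat) (x : nat) := sc_read sg x s.1 s.2.
Definition sc_run (s : seq nat * seq nat) (inp : seq nat) := foldl sc_step s inp.
Definition flush (s : seq nat * seq nat) := s.2 ++ s.1.

Lemma sc_auxE inp st out : sc_aux sg inp st out = flush (sc_run (st, out) inp).
Proof.
by elim: inp st out => [|x t IH] st out //=; case E: sc_read => [st' out']; rewrite IH /sc_step E.
Qed.

Lemma SCE w : SC sg w = flush (sc_run ([::], [::]) w).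
Proof. exact: sc_auxE. Qed.

Lemma sc_run_cat s a b : sc_run s (a ++ b) = sc_run (sc_run s a) b.
Proof. exact: foldl_cat. Qed.

Lemma sc_run_rcons s a x : sc_run s (rcons a x) = sc_step (sc_run s a) x.
Proof. exact: foldl_rcons. Qed.

Lemma sc_readP x st :
  exists k, forall out, sc_read sg x st out = (x :: drop k st, out ++ take k st).
Proof.
elim: st => [|y st [k IH]]; first by exists 0 => out /=; case: ifP; rewrite cats0.
case: (boolP (avoids sg (x :: y :: st))) => [push|pop].
  by exists 0 => out /=; rewrite push cats0.
by exists k.+1 => out /=; rewrite (negbTE pop) IH cat_rcons.
Qed.

Lemma perm_sc_read x st out : perm_eq (flush (sc_read sg x st out)) (out ++ x :: st).
Proof.
have [k ->] := sc_readP x st.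
by rewrite /flush /= -catA perm_cat2l (perm_catCA (take k st) [:: x]) /= cat_take_drop.
Qed.

Lemma perm_sc_run s inp : perm_eq (flush (sc_run s inp)) (flush s ++ inp).
Proof.
elim: inp s => [|x t IH] s /=; first by rewrite cats0.
apply: perm_trans (IH _) _; rewrite -cat1s catA perm_cat2r.
by apply: perm_trans (perm_sc_read _ _ _) _; rewrite /flush -catA perm_cat2l perm_sym perm_catC.
Qed.

Lemma perm_SC w : perm_eq (SC sg w) w.
Proof. by rewrite SCE; apply: perm_sc_run. Qed.

Lemma sc_run_out s inp :
  sc_run s inp = ((sc_run (s.1, [::]) inp).1, s.2 ++ (sc_run (s.1, [::]) inp).2).
Proof.
elim: inp s => [|x t IH] [st out] /=; first by rewrite cats0.
have [k read] := sc_readP x st.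
by rewrite /sc_step /= !read IH [in RHS]IH /= catA.
Qed.

Lemma sc_run_nopop st inp :
  (sc_run (st, [::]) inp).2 = [::] -> (sc_run (st, [::]) inp).1 = rev inp ++ st.
Proof.
elim: inp st => [|x t IH] st //=; have [k read] := sc_readP x st.
rewrite /sc_step /= read sc_run_out /=; case E: (take k st) => // /IH ->.
by rewrite -{2}(cat_take_drop k st) E rev_cons cat_rcons.
Qed.

Definition inert_below (M : nat) (B : seq nat) :=
  forall x T, x < M -> all (gtn M) T -> avoids sg (x :: T ++ B) = avoids sg (x :: T).

Lemma sc_read_inert M B x T out :
  inert_below M B -> avoids sg [:: x] -> x < M -> all (gtn M) T ->
  sc_read sg x (T ++ B) out = ((sc_read sg x T out).1 ++ B, (sc_read sg x T out).2).
Proof.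
move=> inB ax xM; elim: T out => [|y T IH] out aT.
  by have := inB x [::] xM isT; rewrite /= ax; case: B {inB} => [|b B] /= ->; rewrite ?ax.
have /= -> := inB x (y :: T) xM aT.
by case: ifP => // _; rewrite IH //; case/andP: aT.
Qed.

Lemma sc_run_inert M B st out inp : inert_below M B -> (forall x, avoids sg [:: x]) ->
  all (gtn M) inp -> all (gtn M) st ->
  sc_run (st ++ B, out) inp = ((sc_run (st, out) inp).1 ++ B, (sc_run (st, out) inp).2).
Proof.
move=> inB ax; elim: inp st out => [|x t IH] st out //= /andP[xM aT] ast.
have [k read] := sc_readP x st.
rewrite /sc_step /= (sc_read_inert _ inB) // read; apply: (IH (x :: _)) => //=.
by rewrite xM; apply/allP => z /mem_drop/(allP ast).
Qed.

End StackMachine.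

(** * West's stack-sorting map *)

Lemma inert_below21 M : inert_below pat21 M [:: M].
Proof.
move=> x T xM aT; rewrite !avoids21E /= cat_path /= andbT.
have /orP[/eqP->|/(allP aT)/ltnW->] : last x T \in x :: T := mem_last x T.
  by rewrite (ltnW xM) andbT.
by rewrite andbT.
Qed.

Lemma sc_read21_max M st out :
  all (gtn M) st -> sc_read pat21 M st out = ([:: M], out ++ st).
Proof.
elim: st out => [|y st IH] out /=; first by rewrite cats0.
by case/andP => yM ast; rewrite avoids21E /= leqNgt yM IH // cat_rcons.
Qed.

Lemma west_max A M B : all (gtn M) A -> all (gtn M) B ->
  west_s (A ++ M :: B) = west_s A ++ west_s B ++ [:: M].
Proof.
move=> ltA ltB; rewrite /west_s !SCE -cat_rcons sc_run_cat sc_run_rcons /sc_step.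
set sA := sc_run _ _ A; have ltsA : all (gtn M) sA.1.
  apply/allP => z zA; apply: (allP ltA).
  by move: (perm_mem (perm_sc_run pat21 ([::], [::]) A) z) => /= <-; rewrite mem_cat zA orbT.
rewrite sc_read21_max // -[[:: M]]cat0s (sc_run_inert _ (@inert_below21 M)) //.
by rewrite sc_run_out /flush /= -!catA.
Qed.

Lemma west_sorted Q : sorted ltn Q -> west_s Q = Q.
Proof.
elim/last_ind: Q => [|Q M IH] //; rewrite -cats1 (sorted_pairwise ltn_trans) pairwise_cat.
rewrite allrel1r /= andbT -(sorted_pairwise ltn_trans) => /andP[ltQ sQ].
by rewrite (@west_max Q M [::]) // IH.
Qed.

Lemma perm_west w : perm_eq (west_s w) w.
Proof. exact: perm_SC. Qed.

Lemma sorted_west_cat_max A M B : all (gtn M) A -> all (gtn M) B ->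
  sorted ltn (west_s (A ++ M :: B)) =
  [&& allrel ltn A B, sorted ltn (west_s A) & sorted ltn (west_s B)].
Proof.
move=> ltA ltB; rewrite west_max // catA (sorted_pairwise ltn_trans) pairwise_cat.
rewrite allrel1r pairwise_cat -!(sorted_pairwise ltn_trans) andbT.
rewrite (eq_allrel_mem2 _ (perm_mem (perm_west A)) (perm_mem (perm_west B))).
have -> // : all (ltn^~ M) (west_s A ++ west_s B).
by apply/allP => z; rewrite mem_cat !(perm_mem (perm_west _)) => /orP[/(allP ltA)|/(allP ltB)].
Qed.

(** * SC_{3_21} on a word split at its maximum *)

Lemma inert_below321 M Q : sorted leq Q -> inert_below pat3_21 M (M :: Q).
Proof. by move=> sQ x T xM ltT; rewrite !avoids321E /= desc_below_cat_max. Qed.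

Lemma has321_sc_read x st out : ~~ has321 (sc_read pat3_21 x st out).1.
Proof.
elim: st out => [|y st IH] out //=.
by case: ifP => [|_]; [rewrite avoids321E | exact: IH].
Qed.

Lemma sc_read321_push x st out :
  ~~ has321 (x :: st) -> sc_read pat3_21 x st out = (x :: st, out).
Proof. by case: st => [|y st] //= no321; rewrite avoids321E no321. Qed.

Definition pop_witness (st out : seq nat) :=
  exists2 p, p \in out & exists2 q, q \in st & q < p.

Lemma sc_read321_pop_witness x st out : ~~ has321 st -> has321 (x :: st) ->
  pop_witness (sc_read pat3_21 x st out).1 (sc_read pat3_21 x st out).2.
Proof.
elim: st out => [|y st IH] out // no_st has_x /=; rewrite avoids321E has_x /=.
have no_st' := has321_behead no_st.
case: (boolP (has321 (x :: st))) => [|no_x]; first exact: IH.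
have [b [t [st_bt lt_by]]] := has321_pop_descent no_st no_x has_x.
rewrite sc_read321_push //; exists y; first by rewrite mem_rcons mem_head.
by exists b; rewrite // st_bt !inE eqxx orbT.
Qed.

(* When reading [x] pops, the last popped entry sits right above a smaller one
   that stays on the stack (has321_pop_descent); later reads keep or renew such
   a pair. *)
Definition sc321_inv (s : seq nat * seq nat) :=
  ~~ has321 s.1 /\ (s.2 = [::] \/ pop_witness s.1 s.2).

Lemma sc321_inv_run s inp : sc321_inv s -> sc321_inv (sc_run pat3_21 s inp).
Proof.
elim: inp s => [|x t IH] [st out] //= [no_st wit]; apply: IH.
split; first exact: has321_sc_read.
case: (boolP (has321 (x :: st))) => [has_x|no_x]; first by right; apply: sc_read321_pop_witness.
rewrite /sc_step /= sc_read321_push //=; case: wit => [|[p pout [q qst qp]]]; first by left.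
by right; exists p => //; exists q; rewrite // inE qst orbT.
Qed.

Lemma sc321_inv_run0 inp : sc321_inv (sc_run pat3_21 ([::], [::]) inp).
Proof. by apply: sc321_inv_run; split => //; left. Qed.

Lemma sc_run321_sorted st inp :
  sorted leq (rev inp ++ st) -> sc_run pat3_21 (st, [::]) inp = (rev inp ++ st, [::]).
Proof.
elim: inp st => [|x t IH] st //=; rewrite rev_cons cat_rcons => sorted_t.
have sx : sorted leq (x :: st) by case: (cat_sorted2 sorted_t).
by rewrite /sc_step sc_read321_push ?IH //= desc_below_sorted ?(path_sorted sx).
Qed.

Definition sortable (w : seq nat) := sorted ltn (west_s (SC pat3_21 w)).

Section ReadingTheMaximum.

Variables (L R : seq nat) (M : nat).
Hypotheses (ltL : all (gtn M) L) (ltR : all (gtn M) R).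

Let s := sc_run pat3_21 ([::], [::]) (rcons L M).
Let P := s.2.
Let Q := behead s.1.

Lemma sc321_max_top : s.1 = M :: Q.
Proof.
rewrite /Q /s sc_run_rcons /sc_step.
by have [k ->] := sc_readP pat3_21 M (sc_run pat3_21 ([::], [::]) L).1.
Qed.

Lemma perm_sc321_max : perm_eq (P ++ Q) L.
Proof.
have := perm_sc_run pat3_21 ([::], [::]) (rcons L M).
rewrite -/s /flush sc321_max_top /= perm_sym perm_rcons perm_sym.
by rewrite (perm_catCA P [:: M]) /= perm_cons.
Qed.

Lemma sc321_max_ltn : all (gtn M) P /\ all (gtn M) Q.
Proof.
apply/andP; rewrite -all_cat; apply/allP => z.
by rewrite (perm_mem perm_sc321_max) => /(allP ltL).
Qed.

Lemma sorted_sc321_max : sorted leq Q.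
Proof.
have [_ ltQ] := sc321_max_ltn.
by have [] := sc321_inv_run0 (rcons L M); rewrite -/s sc321_max_top => /(sorted_desc_below ltQ).
Qed.

Lemma SC321_cat_max : SC pat3_21 (L ++ M :: R) = P ++ SC pat3_21 R ++ M :: Q.
Proof.
rewrite !SCE -cat_rcons sc_run_cat -/s (surjective_pairing s) sc321_max_top.
rewrite -[M :: Q]cat0s (sc_run_inert _ (@inert_below321 M _ sorted_sc321_max)) //.
by rewrite sc_run_out /flush /= -!catA.
Qed.

Lemma sc321_max_nopopE : P = [::] -> Q = rev L.
Proof.
move=> P0; have := sc_run_nopop P0.
by rewrite -/s sc321_max_top rev_rcons cats0 => -[].
Qed.

Lemma sc321_max_nopop : sorted leq (rev L) -> P = [::].
Proof.
move=> sL; rewrite /P /s sc_run_rcons.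
have := @sc_run321_sorted [::] L; rewrite cats0 => -> //.
by rewrite /sc_step sc_read321_push //= desc_below_sorted.
Qed.

Lemma sc321_max_popped : P = [::] \/ pop_witness Q P.
Proof.
have [_ [|[p pP [q]]]] := sc321_inv_run0 (rcons L M); first by left.
rewrite -/s sc321_max_top inE => /orP[/eqP->|qQ qp]; last by right; exists p => //; exists q.
have [/allP/(_ p pP) pM _] := sc321_max_ltn.
by move=> /(ltn_trans pM); rewrite ltnn.
Qed.

Lemma sortable_cat_max : uniq L ->
  sortable (L ++ M :: R) = [&& sorted ltn (rev L), allrel ltn R L & sortable R].
Proof.
move=> uL; have [ltP ltQ] := sc321_max_ltn.
rewrite /sortable SC321_cat_max catA sorted_west_cat_max //; last first.
  by rewrite all_cat ltP (eq_all_r (perm_mem (perm_SC _ R))) ltR.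
have allrel_SC : allrel ltn (SC pat3_21 R) (rev L) = allrel ltn R L.
  by rewrite allrel_revr (eq_allrel_meml ltn L (perm_mem (perm_SC _ R))).
apply/and3P/and3P => [[ltPQ sPR sQ]|[sL ltRL sR]].
  have P0 : P = [::].
    case: sc321_max_popped => // -[p pP [q qQ qp]].
    have := allrelP ltPQ p q; rewrite mem_cat pP => /(_ isT qQ).
    by rewrite /= ltnNge (ltnW qp).
  move: ltPQ sPR; rewrite P0 (sc321_max_nopopE P0) /= allrel_SC => ltRL sR; split => //.
  by rewrite ltn_sorted_uniq_leq rev_uniq uL -(sc321_max_nopopE P0) sorted_sc321_max.
have P0 := sc321_max_nopop (sub_sorted ltnW sL).
by rewrite P0 (sc321_max_nopopE P0) /= allrel_SC (west_sorted sL).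
Qed.

End ReadingTheMaximum.

(** * Counting the sortable permutations *)

Definition desc_run (m j : nat) : seq nat := rev (iota j.+1 (m - j)).

(* [f] is fuel: any [f >= m] gives the same list (sortables_fuel_enough). *)
Fixpoint sortables_fuel (f m : nat) : seq (seq nat) :=
  if f is f'.+1 then
    if m is m'.+1 then [seq desc_run m' j ++ m :: r | j <- iota 0 m, r <- sortables_fuel f' j]
    else [:: [::]]
  else [:: [::]].

Definition sortables (m : nat) : seq (seq nat) := sortables_fuel m m.

Lemma sortables_fuel_enough f1 f2 m :
  m <= f1 -> m <= f2 -> sortables_fuel f1 m = sortables_fuel f2 m.
Proof.
elim: f1 f2 m => [|f1 IH] [|f2] [|m] // mf1 mf2.
apply: (congr1 flatten); apply/eq_in_map => j.
by rewrite mem_iota => /andP[_ jm]; congr map; apply: IH; rewrite -ltnS (leq_trans jm).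
Qed.

Lemma sortablesS m :
  sortables m.+1 = [seq desc_run m j ++ m.+1 :: r | j <- iota 0 m.+1, r <- sortables j].
Proof.
apply: (congr1 flatten); apply/eq_in_map => j; rewrite mem_iota => /andP[_ jm].
by congr map; apply: sortables_fuel_enough.
Qed.

Lemma perm_desc_run m j r : j <= m -> perm_eq r (iota 1 j) ->
  perm_eq (desc_run m j ++ m.+1 :: r) (iota 1 m.+1).
Proof.
move=> jm pr; have -> : iota 1 m.+1 = iota 1 j ++ iota j.+1 (m - j) ++ [:: m.+1].
  by rewrite -[m.+1]addn1 iotaD -{1}(subnKC jm) iotaD -catA !add1n addn1.
rewrite catA perm_sym cats1 perm_rcons perm_sym (perm_catCA _ [:: m.+1]) /= perm_cons.
by rewrite perm_catC; apply: perm_cat; rewrite ?perm_rev.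
Qed.

Lemma perm_sortables m w : w \in sortables m -> perm_eq w (iota 1 m).
Proof.
elim/ltn_ind: m w => -[|m] IH w; first by rewrite inE => /eqP->.
rewrite sortablesS => /allpairsPdep[j [r [+ rs ->]]]; rewrite mem_iota ltnS => /andP[_ jm].
by apply: perm_desc_run => //; apply: IH rs; rewrite ltnS.
Qed.

Lemma notin_desc_run m j : m.+1 \notin desc_run m j.
Proof.
rewrite mem_rev mem_iota ltnS; case: (leqP j m) => [jm|mj]; last by [].
by rewrite addSn subnKC // ltnn andbF.
Qed.

Lemma cat_cons_inj (T : eqType) (x : T) L1 L2 R1 R2 : x \notin L1 -> x \notin L2 ->
  L1 ++ x :: R1 = L2 ++ x :: R2 -> L1 = L2 /\ R1 = R2.
Proof.
move=> xL1 xL2 eq12; have := congr1 (index x) eq12.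
rewrite !index_cat (negbTE xL1) (negbTE xL2) /= eqxx !addn0 => size12.
by move/eqP: eq12; rewrite eqseq_cat // => /andP[/eqP-> /eqP[->]].
Qed.

Lemma sortables_uniq m : uniq (sortables m).
Proof.
elim/ltn_ind: m => -[|m] IH //; rewrite sortablesS.
apply: allpairs_uniq_dep => [|j|]; first exact: iota_uniq.
  by rewrite mem_iota => /andP[_ jm]; apply: IH.
move=> _ _ /allpairsPdep[j [r [_ rs ->]]] /allpairsPdep[j' [r' [_ rs' ->]]] /=.
case/cat_cons_inj => [||_ eq_r]; rewrite ?notin_desc_run //; subst r'.
have := perm_size (perm_sortables rs'); rewrite (perm_size (perm_sortables rs)) !size_iota.
by move=> eq_j; subst j'.
Qed.

Lemma size_sortables m : size (sortables m.+1) = 2 ^ m.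
Proof.
suff sum_sizes k : sumn [seq size (sortables j) | j <- iota 0 k.+1] = 2 ^ k.
  by rewrite sortablesS size_allpairs_dep sum_sizes.
elim: k => [|k IH] //; rewrite -addn1 iotaD map_cat sumn_cat IH /= sortablesS.
by rewrite size_allpairs_dep IH addn0 addnn -mul2n expnS.
Qed.

Lemma perm_iota_max_split m w : perm_eq w (iota 1 m.+1) ->
  exists L R, w = L ++ m.+1 :: R /\ perm_eq (L ++ R) (iota 1 m).
Proof.
move=> pw; have mw : m.+1 \in w by rewrite (perm_mem pw) mem_iota ltnSn.
case/splitPr: mw pw => L R pw; exists L, R; split => //.
have iota_rcons : iota 1 m.+1 = rcons (iota 1 m) m.+1.
  by rewrite -cats1 -[m.+1]addn1 iotaD add1n addn1.
by move: pw; rewrite iota_rcons perm_sym perm_rcons perm_sym -cat1s perm_catCA /= perm_cons.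
Qed.

Lemma perm_iota_cat_ltn m L R : perm_eq (L ++ R) (iota 1 m) -> sorted ltn (rev L) ->
  allrel ltn R L -> L = desc_run m (size R) /\ perm_eq R (iota 1 (size R)).
Proof.
move=> pLR sL ltRL; set t := size R.
have tm : t <= m by rewrite -(size_iota 1 m) -(perm_size pLR) size_cat leq_addl.
have sorted_sorts : sort leq R ++ sort leq L = iota 1 t ++ iota t.+1 (m - t).
  rewrite -iotaD subnKC //; apply: (sorted_eq leq_trans anti_leq).
  - rewrite (sorted_pairwise leq_trans) pairwise_cat -!(sorted_pairwise leq_trans).
    rewrite !sort_sorted ?andbT; [|exact: leq_total..].
    by apply/allrelP => x y; rewrite !mem_sort => xR yL; apply/ltnW/(allrelP ltRL).
  - exact: iota_sorted.
  - by apply: perm_trans pLR; rewrite perm_catC; apply: perm_cat; rewrite perm_sort.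
move/eqP: sorted_sorts; rewrite eqseq_cat ?size_sort ?size_iota // => /andP[/eqP sR /eqP sL'].
split; last by rewrite -sR perm_sym perm_sort.
rewrite /desc_run -sL' -[LHS]revK; congr rev.
apply: (sorted_eq leq_trans anti_leq); first exact: (sub_sorted ltnW sL).
  exact: (sort_sorted leq_total).
by rewrite perm_rev perm_sym perm_sort.
Qed.

Lemma desc_run_ltn m j : all (gtn m.+1) (desc_run m j).
Proof.
apply/allP => x; rewrite mem_rev mem_iota /=; case: (leqP j m) => [jm|/ltnW].
  by rewrite addSn subnKC // => /andP[].
by rewrite -subn_eq0 => /eqP->; rewrite addn0 => /andP[jx]; rewrite ltnNge jx.
Qed.

Lemma mem_sortables m w : perm_eq w (iota 1 m) -> (w \in sortables m) = sortable w.
Proof.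
elim/ltn_ind: m w => -[|m] IH w pw.
  by have /nilP-> : nilp w by rewrite /nilp (perm_size pw).
apply/idP/idP => [|sw].
  rewrite sortablesS => /allpairsPdep[j [r [+ rs ->]]]; rewrite mem_iota ltnS => /andP[_ jm].
  have pr := perm_sortables rs.
  have r_le_j x : x \in r -> x <= j by rewrite (perm_mem pr) mem_iota add1n ltnS => /andP[].
  have ltr : all (gtn m.+1) r by apply/allP => x /r_le_j /leq_trans; apply.
  rewrite sortable_cat_max ?rev_uniq ?iota_uniq ?desc_run_ltn // -(IH j) ?ltnS // rs andbT.
  rewrite /desc_run revK iota_ltn_sorted; apply/allrelP => x y /r_le_j xj.
  by rewrite mem_rev mem_iota => /andP[jy _]; apply: leq_ltn_trans xj jy.
have [L [R [wE pLR]]] := perm_iota_max_split pw.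
have ltLR : all (gtn m.+1) (L ++ R).
  by apply/allP => x; rewrite (perm_mem pLR) mem_iota ltnS => /andP[].
have uL : uniq L by move: (perm_uniq pLR); rewrite iota_uniq cat_uniq => /and3P[].
have Rm : size R < m.+1 by rewrite ltnS -(size_iota 1 m) -(perm_size pLR) size_cat leq_addl.
move: sw ltLR; rewrite wE all_cat => + /andP[ltL ltR].
rewrite sortable_cat_max // => /and3P[sL ltRL sR].
have [LE pR] := perm_iota_cat_ltn pLR sL ltRL.
rewrite sortablesS; apply/allpairsPdep; exists (size R), R.
by rewrite mem_iota IH // LE.
Qed.

Lemma eq_iota_sorted s m : perm_eq s (iota 1 m) -> (s == iota 1 m) = sorted ltn s.
Proof.
move=> ps; apply/eqP/idP => [->|ss]; first exact: iota_ltn_sorted.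
by apply: (irr_sorted_eq ltn_trans ltnn); rewrite ?iota_ltn_sorted //; apply: perm_mem.
Qed.

Lemma val_word_tuple n : val [tuple (nat_of_ord i).+1 | i < n] = iota 1 n.
Proof. by rewrite /= -(addn0 1) iotaDl -val_enum_ord -map_comp. Qed.

Lemma perm_iota_wordP n (s : seq nat) :
  reflect (exists g : 'S_n, s = word g) (perm_eq s (iota 1 n)).
Proof.
have wordE (g : 'S_n) : word g = [tuple tnth [tuple i.+1 | i < n] (g i) | i < n].
  by apply: eq_map => i; rewrite tnth_mktuple.
rewrite -val_word_tuple; apply: (iffP tuple_permP) => -[g ->]; exists g; by rewrite wordE.
Qed.

Lemma word_inj n : injective (@word n).
Proof.
move=> g h /eq_in_map eq_gh; apply/permP => i.
by apply: val_inj; case: (eq_gh i (mem_enum _ i)).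
Qed.

Lemma card_word_in n (S : seq (seq nat)) :
  uniq S -> {subset S <= [pred w | perm_eq w (iota 1 n)]} ->
  #|[set g : 'S_n | word g \in S]| = size S.
Proof.
move=> uS permS; rewrite cardE -(size_map (@word n)); apply: perm_size.
apply: uniq_perm => //; first by rewrite map_inj_uniq ?enum_uniq //; apply: word_inj.
move=> w; apply/mapP/idP => [[g] |wS]; first by rewrite mem_enum inE => gS ->.
have /perm_iota_wordP [g wg] := permS w wS.
by exists g; rewrite // mem_enum inE -wg.
Qed.

Theorem mainTheorem8 (n : nat) : 0 < n -> #|Sort_set n pat3_21| = 2 ^ n.-1.
Proof.
case: n => // n _; rewrite -size_sortables -(card_word_in (sortables_uniq _) (@perm_sortables _)).
apply: eq_card => g; rewrite !inE.
have pg : perm_eq (word g) (iota 1 n.+1) by apply/perm_iota_wordP; exists g.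
rewrite mem_sortables // eq_iota_sorted //.
by apply: perm_trans pg; apply: perm_trans (perm_west _) (perm_SC _ _).
Qed.
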